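(* For every positive integer $n$, $$\sum_{r=1}^{n-1}\frac{(-1)^rB_r}{r}\left(\frac{1}{n}\sum_{l=r}^{n}(-1)^l\binom{n}{l}H_{l-1}+\frac{1}{r(n-r)}\right)=\frac{H_{n-1}^{(2)}}{n}+\frac{H_{n-1}}{n^2}.$$
   Context: The Bernoulli numbers $B_n$ are defined by $\sum_{n=0}^\infty \frac{B_n}{n!}t^n=\frac{t}{e^t-1}$ (so $B_1=-\tfrac12$). For $m\ge 0$, $H_m=\sum_{k=1}^m \frac1k$ and $H_m^{(2)}=\sum_{k=1}^m\frac1{k^2}$ (empty sums are $0$, so $H_0=H_0^{(2)}=0$). *)

From mathcomp Require Import all_boot all_order all_algebra.
Set Implicit Arguments. Unset Strict Implicit. Unset Printing Implicit Defensive.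
Import Order.TTheory GRing.Theory Num.Theory.
Local Open Scope ring_scope.

(* Bernoulli numbers with B_1 = -1/2, i.e. the coefficients of t/(e^t - 1).
   Computed through the recurrence equivalent to the generating function:
   sum_{k=0}^{m} C(m+1,k) B_k = 0 for m >= 1, B_0 = 1.
   bern_list m = [:: B_0; ...; B_m]. *)
Fixpoint bern_list (m : nat) : seq rat :=
  match m with
  | 0%N => [:: 1]
  | m'.+1 =>
      let s := bern_list m' in
      rcons s (- ((m'.+2)%:R)^-1 *
               \sum_(k < m'.+1) ('C(m'.+2, k))%:R * nth 0 s k)
  end.

Definition bernoulli (n : nat) : rat := nth 0 (bern_list n) n.

Definition harm (m : nat) : rat := \sum_(1 <= k < m.+1) (k%:R)^-1.
Definition harm2 (m : nat) : rat := \sum_(1 <= k < m.+1) (k%:R ^+ 2)^-1.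

(* The inner alternating sum has the closed form
     sum_(l=r)^n (-1)^l C(n,l) H_(l-1)
       = (-1)^r r (C(n,r) H_(r-1) / n - sum_(j=r)^(n-1) C(j,r) / j^2),
   obtained by telescoping down from l = n.  Substituting it, the signs cancel
   and every remaining piece is a sum over r of B_r C(m,r) against a weight
   independent of r; exchanging summations, these collapse through
   sum_(r=0)^m C(m,r) B_r = (-1)^m B_m, a binomial-inversion consequence of the
   defining recurrence. *)

From mathcomp Require Import all_boot all_order all_algebra.
From mathcomp Require Import ring lra zify.
Import Order.TTheory GRing.Theory Num.Theory.
Local Open Scope ring_scope.

Lemma mul_bin_bin m j k : (k <= j)%N -> (j <= m)%N ->
  ('C(m, j) * 'C(j, k) = 'C(m, k) * 'C(m - k, j - k))%N.
Proof.
move=> le_kj le_jm; have le_km := leq_trans le_kj le_jm.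
apply/eqP; rewrite -(eqn_pmul2r (fact_gt0 k)) -(eqn_pmul2r (fact_gt0 (j - k))).
rewrite -(eqn_pmul2r (fact_gt0 (m - j))); apply/eqP.
transitivity m`!; first by rewrite -(bin_fact le_jm) -(bin_fact le_kj); ring.
have le_jk_mk : (j - k <= m - k)%N by rewrite leq_sub2r.
have -> : (m - j = (m - k) - (j - k))%N by rewrite subnBA // subnK.
by rewrite -(bin_fact le_km) -(bin_fact le_jk_mk); ring.
Qed.

Lemma natr_neq0 (R : numDomainType) n : (0 < n)%N -> n%:R != 0 :> R.
Proof. by rewrite pnatr_eq0 -lt0n. Qed.

Section BinomialSums.
Variable R : comPzRingType.

Lemma sum_bin_sign n :
  \sum_(0 <= i < n.+1) 'C(n, i)%:R * (-1) ^+ i = (n == 0%N)%:R :> R.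
Proof.
have := exprBn (1 : R) 1 n; rewrite subrr expr0n => ->.
rewrite big_mkord; apply: eq_bigr => i _.
by rewrite !expr1n !mulr1 mulr_natl.
Qed.

Lemma sum_bin_bin_sign m k :
  \sum_(0 <= j < m.+1) ('C(m, j) * 'C(j, k))%:R * (-1) ^+ j
    = (-1) ^+ m * (m == k)%:R :> R.
Proof.
have [lt_mk|le_km] := ltnP m k.
  rewrite big1_seq ?(ltn_eqF lt_mk) ?mulr0 // => j.
  rewrite mem_index_iota => /andP[_ lt_jm].
  by rewrite (bin_small (leq_trans lt_jm lt_mk)) muln0 mul0r.
rewrite (@big_cat_nat _ _ _ k) //= ?(leqW le_km) // big1_seq ?add0r; last first.
  move=> j /andP[_]; rewrite mem_index_iota => /andP[_ lt_jk].
  by rewrite (bin_small lt_jk) muln0 mul0r.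
rewrite -{1}(add0n k) big_addn subSn //.
transitivity ('C(m, k)%:R * (-1) ^+ k *
   \sum_(0 <= i < (m - k).+1) 'C(m - k, i)%:R * (-1) ^+ i : R).
  rewrite mulr_sumr; apply: eq_big_nat => i /andP[_ lt_i].
  rewrite mul_bin_bin ?leq_addl ?addnK //; last by lia.
  by rewrite natrM exprD [(-1) ^+ i * _]mulrC mulrACA.
rewrite (sum_bin_sign (m - k)) subn_eq0; case: eqVneq => [->|ne_mk].
  by rewrite leqnn binn mul1r.
by rewrite leqNgt ltn_neqAle eq_sym ne_mk le_km !mulr0.
Qed.

Lemma sum_mul_eq1 n (F : nat -> R) :
  \sum_(0 <= k < n) F k * (k == 1%N)%:R = (1 < n)%:R * F 1%N.
Proof.
case: n => [|[|n]]; first by rewrite big_geq // mul0r.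
  by rewrite big_nat1 mulr0 mul0r.
rewrite big_ltn // big_ltn // big1_seq => [|k /andP[_]].
  by rewrite mulr0 add0r mulr1 mul1r addr0.
by rewrite mem_index_iota => /andP[lt1k _]; rewrite (gtn_eqF lt1k) mulr0.
Qed.

Lemma big_bin_widen j a n (F : nat -> R) : (a <= j.+1)%N -> (j.+1 <= n)%N ->
  \sum_(a <= k < n) 'C(j, k)%:R * F k = \sum_(a <= k < j.+1) 'C(j, k)%:R * F k.
Proof.
move=> le_a le_n; rewrite (big_cat_nat le_a le_n) /= [X in _ + X]big1_seq ?addr0 //.
move=> k /andP[_]; rewrite mem_index_iota => /andP[lt_jk _].
by rewrite bin_small ?mul0r.
Qed.

Lemma big_bin_widenl a r n (F : nat -> R) : (a <= r)%N ->
  \sum_(a <= j < n) 'C(j, r)%:R * F j = \sum_(r <= j < n) 'C(j, r)%:R * F j.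
Proof.
move=> le_ar; have [le_rn|lt_nr] := leqP r n.
  rewrite (big_cat_nat le_ar le_rn) /= big1_seq ?add0r // => j /andP[_].
  by rewrite mem_index_iota => /andP[_ lt_jr]; rewrite bin_small ?mul0r.
rewrite [RHS]big_geq ?(ltnW lt_nr) // big1_seq // => j /andP[_].
rewrite mem_index_iota => /andP[_ lt_jn].
by rewrite bin_small ?mul0r // (ltn_trans lt_jn).
Qed.

End BinomialSums.

Lemma size_bern_list m : size (bern_list m) = m.+1.
Proof. by elim: m => //= m IHm; rewrite size_rcons IHm. Qed.

Lemma nth_bern_list m k : (k <= m)%N -> nth 0 (bern_list m) k = bernoulli k.
Proof.
elim: m => [|m IHm]; first by rewrite leqn0 => /eqP ->.
rewrite leq_eqVlt => /orP[/eqP -> //|]; rewrite ltnS => le_km.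
by rewrite /= nth_rcons size_bern_list ltnS le_km IHm.
Qed.

Lemma bernoulli0 : bernoulli 0 = 1. Proof. by []. Qed.

Lemma bernoulli_rec m : (1 < m)%N -> \sum_(k < m) 'C(m, k)%:R * bernoulli k = 0.
Proof.
case: m => [//|[//|m]] _; rewrite big_ord_recr /=.
have -> : bernoulli m.+1
    = - (m.+2%:R)^-1 * \sum_(k < m.+1) 'C(m.+2, k)%:R * bernoulli k.
  rewrite /bernoulli /= nth_rcons size_bern_list ltnn eqxx.
  by congr (_ * _); apply: eq_bigr => k _; rewrite nth_bern_list // -ltnS.
by rewrite binSn mulrA mulrN mulfV ?pnatr_eq0 // mulN1r addrN.
Qed.

Lemma sum_bin_bernoulli j :
  \sum_(0 <= k < j) 'C(j, k)%:R * bernoulli k = (j == 1%N)%:R.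
Proof.
case: j => [|[|j]]; first by rewrite big_geq.
  by rewrite big_nat1 bernoulli0 mulr1.
by rewrite big_mkord bernoulli_rec.
Qed.

Lemma sum_bin_sign_bernoulli m : (0 < m)%N ->
  \sum_(0 <= k < m) 'C(m, k)%:R * (-1) ^+ k * bernoulli k = m%:R.
Proof.
move=> m_gt0.
have inner j : (j <= m)%N ->
    \sum_(0 <= k < m.+1) 'C(j, k)%:R * bernoulli k = bernoulli j + (j == 1%N)%:R.
  move=> le_jm; rewrite (@big_bin_widen _ j) // big_nat_recr //=.
  by rewrite sum_bin_bernoulli binn mul1r addrC.
(* Evaluate the double sum X in two ways. *)
pose X := \sum_(0 <= j < m.+1) 'C(m, j)%:R * (-1) ^+ j *
            \sum_(0 <= k < m.+1) 'C(j, k)%:R * bernoulli k.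
have X_exchanged : X = (-1) ^+ m * bernoulli m.
  rewrite /X; under eq_bigr do rewrite mulr_sumr.
  rewrite exchange_big_nat /=.
  transitivity (\sum_(0 <= k < m.+1) bernoulli k * ((-1) ^+ m * (m == k)%:R)).
    apply: eq_bigr => k _; rewrite -sum_bin_bin_sign mulr_sumr.
    by apply: eq_bigr => j _; rewrite natrM; ring.
  rewrite big_nat_recr //= eqxx big1_seq ?add0r => [|k /andP[_]].
    by rewrite mulr1 mulrC.
  by rewrite mem_index_iota => /andP[_ lt_km]; rewrite (gtn_eqF lt_km) !mulr0.
have X_inner : X = \sum_(0 <= j < m.+1) 'C(m, j)%:R * (-1) ^+ j * bernoulli j - m%:R.
  rewrite /X; under eq_big_nat => j /andP[_ lt_jm] do rewrite inner // mulrDr.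
  by rewrite big_split /= sum_mul_eq1 ltnS m_gt0 bin1 expr1 mul1r mulrN1.
by move: X_inner; rewrite X_exchanged big_nat_recr //= binn mul1r => X_eq; lra.
Qed.

(* The Bernoulli numbers for the other sign convention, B^+_1 = 1/2. *)
Definition bernoulli_plus m := (-1) ^+ m * bernoulli m.

Lemma bernoulli_plusE m : bernoulli_plus m = bernoulli m + (m == 1%N)%:R.
Proof.
elim/ltn_ind: m => m IHm.
pose d k := bernoulli_plus k - bernoulli k - (k == 1%N)%:R.
suff d_m0 : d m = 0 by rewrite -[LHS]subr0 -d_m0 /d; ring.
have sum_d : \sum_(0 <= k < m.+1) 'C(m.+1, k)%:R * d k = 0.
  transitivity (\sum_(0 <= k < m.+1) 'C(m.+1, k)%:R * (-1) ^+ k * bernoulli k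
     - \sum_(0 <= k < m.+1) 'C(m.+1, k)%:R * bernoulli k
     - \sum_(0 <= k < m.+1) 'C(m.+1, k)%:R * (k == 1%N)%:R).
    by rewrite -!sumrB; apply: eq_bigr => k _; rewrite /d /bernoulli_plus; ring.
  rewrite sum_bin_sign_bernoulli // sum_bin_bernoulli sum_mul_eq1 bin1.
  by case: m {IHm d} => [|m]; rewrite /= ?mul0r ?mul1r ?subr0 ?subrr.
move: sum_d; rewrite big_nat_recr //= big1_seq ?add0r => [|k /andP[_]]; last first.
  by rewrite mem_index_iota => /andP[_ lt_km]; rewrite /d IHm //; ring.
by move/eqP; rewrite mulf_eq0 pnatr_eq0 binSn => /orP[//|/eqP].
Qed.

Lemma sum_bin_bernoulli_plus m :
  \sum_(1 <= r < m.+1) 'C(m, r)%:R * bernoulli r = bernoulli_plus m - 1.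
Proof.
have full_sum : \sum_(0 <= r < m.+1) 'C(m, r)%:R * bernoulli r = bernoulli_plus m.
  by rewrite big_nat_recr //= sum_bin_bernoulli binn mul1r bernoulli_plusE addrC.
by rewrite -full_sum [in RHS](@big_ltn _ _ _ 0) // bin0 bernoulli0 mulr1 [1 + _]addrC addrK.
Qed.

Lemma sum_bin_div_top (R : numFieldType) r N : (0 < r)%N ->
  \sum_(r <= j < N.+1) 'C(j, r)%:R / j%:R = 'C(N, r)%:R / r%:R :> R.
Proof.
move=> r_gt0; elim: N => [|N IHN].
  by case: r r_gt0 => // r _; rewrite big_geq // mul0r.
have [lt_Nr|le_rN] := ltnP N.+1 r; first by rewrite big_geq // bin_small // mul0r.
rewrite big_nat_recr //= IHN.
have binN : 'C(N, r)%:R = (N.+1%:R - r%:R) * 'C(N.+1, r)%:R / N.+1%:R :> R.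
  by rewrite -natrB // -natrM -mul_bin_down natrM mulrC mulKf ?natr_neq0.
by rewrite binN; field; rewrite nat1r !natr_neq0.
Qed.

Lemma harmS m : harm m.+1 = harm m + (m.+1%:R)^-1.
Proof. by rewrite /harm big_nat_recr. Qed.

Lemma harm_pred {m} : (0 < m)%N -> harm m = harm m.-1 + (m%:R)^-1.
Proof. by case: m => // m _; rewrite harmS. Qed.

Lemma sum_bin_subn_div n r :
  \sum_(1 <= j < n.+1) 'C(n - j, r)%:R / j%:R = 'C(n, r)%:R * (harm n - harm r).
Proof.
elim: n r => [|n IHn] [|r].
- by rewrite big_geq // subrr mulr0.
- by rewrite big_geq // bin0n mul0r.
- rewrite bin0 mul1r /harm [X in _ - X]big_geq // subr0.
  by apply: eq_bigr => j _; rewrite bin0 mul1r.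
rewrite big_nat_recr //= subnn bin0n mul0r addr0.
transitivity (\sum_(1 <= j < n.+1) 'C(n - j, r.+1)%:R / j%:R +
              \sum_(1 <= j < n.+1) 'C(n - j, r)%:R / j%:R : rat).
  rewrite -big_split; apply: eq_big_nat => j /andP[_ le_jn] /=.
  by rewrite subSn // binS natrD mulrDl.
have binSr : 'C(n, r.+1)%:R = n.+1%:R * 'C(n, r)%:R / r.+1%:R - 'C(n, r)%:R :> rat.
  rewrite -[n.+1%:R * _]natrM mul_bin_diag binS natrM natrD.
  by rewrite mulrC mulKf ?addrK // natr_neq0.
by rewrite !IHn !harmS binS natrD binSr; field; rewrite !nat1r !natr_neq0.
Qed.

Definition alt_bin_harm n r : rat :=
  \sum_(r <= l < n.+1) (-1) ^+ l * 'C(n, l)%:R * harm l.-1.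

Definition bin_sqr_sum n r : rat := \sum_(r <= j < n) 'C(j, r)%:R / j%:R ^+ 2.

Lemma bin_sqr_sumS n r : (0 < r)%N -> (r < n)%N ->
  r%:R * bin_sqr_sum n r + r.+1%:R * bin_sqr_sum n r.+1 = 'C(n.-1, r)%:R / r%:R.
Proof.
move=> r_gt0 lt_rn.
have -> : bin_sqr_sum n r.+1 = \sum_(r <= j < n) 'C(j, r.+1)%:R / j%:R ^+ 2.
  by rewrite [RHS]big_ltn // bin_small // mul0r add0r.
rewrite /bin_sqr_sum !mulr_sumr -big_split /=.
rewrite -{1}(ltn_predK lt_rn) -sum_bin_div_top //.
apply: eq_big_nat => j /andP[le_rj _].
have binSr : r.+1%:R * 'C(j, r.+1)%:R = (j%:R - r%:R) * 'C(j, r)%:R :> rat.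
  by rewrite -natrB // -!natrM mul_bin_left.
by rewrite (mulrA r.+1%:R) binSr; field; rewrite natr_neq0 // (leq_trans r_gt0).
Qed.

Definition alt_bin_harm_closed n r : rat :=
  (-1) ^+ r * r%:R * ('C(n, r)%:R * harm r.-1 / n%:R - bin_sqr_sum n r).

Lemma alt_bin_harm_closedB n r : (0 < r)%N -> (r < n)%N ->
  alt_bin_harm_closed n r - alt_bin_harm_closed n r.+1
    = (-1) ^+ r * 'C(n, r)%:R * harm r.-1.
Proof.
move=> r_gt0 lt_rn; have n_gt0 := ltn_trans r_gt0 lt_rn.
have sqr_sum_r : bin_sqr_sum n r
    = ('C(n.-1, r)%:R / r%:R - r.+1%:R * bin_sqr_sum n r.+1) / r%:R.
  by rewrite -bin_sqr_sumS //; field; rewrite natr_neq0.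
have binSr : 'C(n, r.+1)%:R = (n%:R - r%:R) * 'C(n, r)%:R / r.+1%:R :> rat.
  by rewrite -natrB ?(ltnW lt_rn) // -natrM -mul_bin_left natrM mulrC mulKf // natr_neq0.
have bin_pred : 'C(n.-1, r)%:R = (n%:R - r%:R) * 'C(n, r)%:R / n%:R :> rat.
  by rewrite -natrB ?(ltnW lt_rn) // -natrM -mul_bin_down natrM mulrC mulKf ?natr_neq0.
rewrite /alt_bin_harm_closed /= (harm_pred r_gt0) sqr_sum_r bin_pred binSr exprS.
by field; rewrite nat1r !natr_neq0.
Qed.

Lemma alt_bin_harmE n r : (0 < r)%N -> (r <= n)%N ->
  alt_bin_harm n r = alt_bin_harm_closed n r.
Proof.
move=> r_gt0 le_rn.
have last_term : alt_bin_harm_closed n n = (-1) ^+ n * 'C(n, n)%:R * harm n.-1.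
  rewrite /alt_bin_harm_closed /bin_sqr_sum big_geq // subr0 binn mul1r.
  by field; rewrite natr_neq0 // (leq_trans r_gt0).
rewrite /alt_bin_harm big_nat_recr //= -last_term.
rewrite (@telescope_sumr_eq _ _ _ (fun k => - alt_bin_harm_closed n k)) //.
  by rewrite opprK addrC addNKr.
move=> k /andP[le_rk lt_kn].
by rewrite opprK addrC -alt_bin_harm_closedB // (leq_trans r_gt0).
Qed.

Lemma sum_bernoulli_bin_comp N m (g : nat -> nat) (w : nat -> rat) :
    (forall j, (1 <= j < m)%N -> (g j < N)%N) ->
  \sum_(1 <= r < N) bernoulli r * \sum_(1 <= j < m) 'C(g j, r)%:R * w j
    = \sum_(1 <= j < m) (bernoulli_plus (g j) - 1) * w j.
Proof.
move=> g_lt; under eq_bigr do rewrite mulr_sumr.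
rewrite exchange_big_nat /=; apply: eq_big_nat => j /g_lt lt_gN.
rewrite -sum_bin_bernoulli_plus mulr_suml.
under [RHS]eq_bigr do rewrite -mulrA.
by rewrite -(@big_bin_widen _ _ _ N) //; apply: eq_bigr => r _; rewrite mulrCA.
Qed.

Lemma sum_bernoulli_bin_sqr_sum n :
  \sum_(1 <= r < n) bernoulli r * bin_sqr_sum n r
    = \sum_(1 <= j < n) (bernoulli_plus j - 1) / j%:R ^+ 2.
Proof.
rewrite -(@sum_bernoulli_bin_comp n n id) => [|j /andP[] //].
apply: eq_big_nat => r /andP[r_gt0 _]; congr (_ * _).
by rewrite /bin_sqr_sum (@big_bin_widenl _ 1 r).
Qed.

Lemma bin_harm_pred_split n r : (0 < r)%N -> (r <= n)%N ->
  'C(n, r)%:R * harm r.-1 = 'C(n, r)%:R * harm n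
     - \sum_(1 <= j < n.+1) 'C(n - j, r)%:R / j%:R
     - \sum_(1 <= j < n.+1) 'C(j, r)%:R / j%:R.
Proof.
move=> r_gt0 le_rn.
rewrite sum_bin_subn_div (@big_bin_widenl _ 1 r) //= sum_bin_div_top //.
by rewrite (harm_pred r_gt0); field; rewrite natr_neq0.
Qed.

Lemma sum_bin_bernoulli_harm n :
  \sum_(1 <= r < n.+1) 'C(n, r)%:R * bernoulli r * harm r.-1
    = harm n * (bernoulli_plus n - 1)
      - \sum_(1 <= j < n.+1) (bernoulli_plus (n - j) - 1) / j%:R
      - \sum_(1 <= j < n.+1) (bernoulli_plus j - 1) / j%:R.
Proof.
rewrite -sum_bin_bernoulli_plus mulr_sumr.
rewrite -(@sum_bernoulli_bin_comp n.+1 _ (subn n)) => [|j _]; last by rewrite ltnS leq_subr.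
rewrite -(@sum_bernoulli_bin_comp n.+1 _ id) => [|j /andP[_ //]].
rewrite -!sumrB; apply: eq_big_nat => r /andP[r_gt0 le_rn].
by rewrite mulrAC bin_harm_pred_split //; ring.
Qed.

Lemma sum_bin_bernoulli_harm_pred n : (1 < n)%N ->
  \sum_(1 <= r < n) 'C(n, r)%:R * bernoulli r * harm r.-1
    = harm n.-1 - \sum_(1 <= r < n)
                    (bernoulli_plus r / r%:R + bernoulli_plus r / (n - r)%:R).
Proof.
move=> n_gt1; have n_gt0 := ltnW n_gt1.
have Bn : bernoulli_plus n = bernoulli n.
  by rewrite bernoulli_plusE (gtn_eqF n_gt1) addr0.
have harm_sum : \sum_(1 <= j < n.+1) 1 / j%:R = harm n.
  by apply: eq_bigr => j _; rewrite mul1r.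
have sum_rev : \sum_(1 <= j < n) bernoulli_plus (n - j) / j%:R
    = \sum_(1 <= j < n) bernoulli_plus j / (n - j)%:R.
  rewrite big_nat_rev; apply: eq_big_nat => j /andP[_ lt_jn].
  by rewrite add1n subSS subKn // ltnW.
have := sum_bin_bernoulli_harm n.
under [X in _ = _ - X - _]eq_bigr do rewrite mulrBl.
under [X in _ = _ - _ - X]eq_bigr do rewrite mulrBl.
rewrite !sumrB harm_sum !big_nat_recr //= sum_rev subnn binn mul1r.
rewrite big_split /= (harm_pred n_gt0) Bn bernoulli_plusE bernoulli0 addr0 => split_sum.
apply: (addIr (bernoulli n * harm n.-1)); rewrite split_sum.
by field; rewrite natr_neq0.
Qed.

Lemma bernoulli_plus_sign r : bernoulli_plus r * (-1) ^+ r = bernoulli r.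
Proof. by rewrite /bernoulli_plus mulrAC -expr2 sqrr_sign mul1r. Qed.

Lemma summand_split n r : (0 < r)%N -> (r < n)%N ->
  (-1) ^+ r * bernoulli r / r%:R *
    ((n%:R)^-1 * alt_bin_harm n r + (r%:R * (n - r)%:R)^-1)
  = (n%:R ^+ 2)^-1 * ('C(n, r)%:R * bernoulli r * harm r.-1)
    - (n%:R)^-1 * (bernoulli r * bin_sqr_sum n r)
    + (n%:R)^-1 * (bernoulli_plus r / r%:R ^+ 2)
    + (n%:R ^+ 2)^-1 * (bernoulli_plus r / r%:R + bernoulli_plus r / (n - r)%:R).
Proof.
move=> r_gt0 lt_rn; have n_gt0 := ltn_trans r_gt0 lt_rn.
have nr_neq0 : n%:R - r%:R != 0 :> rat.
  by rewrite -natrB ?(ltnW lt_rn) // natr_neq0 // subn_gt0.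
rewrite alt_bin_harmE ?(ltnW lt_rn) // /alt_bin_harm_closed -/(bernoulli_plus r).
(* With B_r = B^+_r (-1)^r the sign becomes a mere atom of a field identity. *)
rewrite -!bernoulli_plus_sign natrB ?(ltnW lt_rn) //.
by field; rewrite nr_neq0 !natr_neq0.
Qed.

Theorem mainTheorem1 (n : nat) (hn : (0 < n)%N) :
  \sum_(1 <= r < n)
     ((-1) ^+ r * bernoulli r / r%:R) *
     ((n%:R)^-1 * \sum_(r <= l < n.+1)
                    (-1) ^+ l * ('C(n, l))%:R * harm l.-1
      + (r%:R * (n - r)%:R)^-1)
  = harm2 n.-1 / n%:R + harm n.-1 / (n%:R ^+ 2).
Proof.
have [n_le1|n_gt1] := leqP n 1.
  have -> : n = 1%N by apply/eqP; rewrite eqn_leq n_le1 hn.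
  by rewrite /harm2 /harm !big_geq // !mul0r addr0.
under eq_big_nat => r /andP[r_gt0 lt_rn].
  by rewrite -/(alt_bin_harm n r) summand_split //; over.
rewrite !big_split /= sumrN -!mulr_sumr.
rewrite sum_bin_bernoulli_harm_pred // sum_bernoulli_bin_sqr_sum.
have sum_sqr_split : \sum_(1 <= j < n) (bernoulli_plus j - 1) / j%:R ^+ 2
    = \sum_(1 <= j < n) bernoulli_plus j / j%:R ^+ 2 - harm2 n.-1.
  by rewrite /harm2 (ltn_predK n_gt1) -sumrB; apply: eq_bigr => j _; rewrite mulrBl mul1r.
rewrite sum_sqr_split.
by field; rewrite natr_neq0 // ltnW.
Qed.
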